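(* A ring $R$ is von Neumann regular if and only if for every right $R$-module $E$ and any two submodules $A,B\subseteq E$ that are f-injective, the submodule $A\cap B$ is f-injective.
   Context: Rings are associative with identity; modules are unitary right modules. A right $R$-module $M$ is f-injective if for every finitely generated right ideal $I$ of $R$ and every $R$-homomorphism $f:I\to M$ there is an $R$-homomorphism $\bar f:R\to M$ with $\bar f|_I=f$. *)

(* Rings: associative with identity (pzRingType, possibly
   non-commutative; the zero ring is allowed). Right R-modules are given by an
   additive abelian group E (zmodType) with a right action act : E -> R -> E. *)
From HB Require Import structures.
From mathcomp Require Import all_boot all_order all_algebra.
Set Implicit Arguments. Unset Strict Implicit. Unset Printing Implicit Defensive.
Import GRing.Theory.
Local Open Scope ring_scope.

Definition von_neumann_regular (R : pzRingType) : Prop :=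
  forall a : R, exists x : R, a = a * x * a.

Definition rmod_axioms (R : pzRingType) (E : zmodType) (act : E -> R -> E) : Prop :=
  [/\ forall (x y : E) (r : R), act (x + y) r = act x r + act y r,
      forall (x : E) (r s : R), act x (r + s) = act x r + act x s,
      forall (x : E) (r s : R), act x (r * s) = act (act x r) s
    & forall x : E, act x 1 = x].

Definition submodule (R : pzRingType) (E : zmodType) (act : E -> R -> E)
    (A : E -> Prop) : Prop :=
  [/\ A 0, forall x y, A x -> A y -> A (x - y)
    & forall x r, A x -> A (act x r)].

Definition fg_right_ideal (R : pzRingType) (a : seq R) (x : R) : Prop :=
  exists rs : seq R, size rs = size a /\
    x = \sum_(i < size a) a`_i * rs`_i.

(* the submodule A of E is f-injective: every R-homomorphism f from a
   finitely generated right ideal I into A extends to an R-homomorphism R -> A.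
   (Finitely generated right ideals are exactly the fg_right_ideal a.) *)
Definition f_injective (R : pzRingType) (E : zmodType) (act : E -> R -> E)
    (A : E -> Prop) : Prop :=
  forall (a : seq R) (f : R -> E),
    (forall x, fg_right_ideal a x -> A (f x)) ->
    (forall x y, fg_right_ideal a x -> fg_right_ideal a y -> f (x + y) = f x + f y) ->
    (forall x r, fg_right_ideal a x -> f (x * r) = act (f x) r) ->
    exists g : R -> E,
      [/\ forall x, A (g x),
          forall x y, g (x + y) = g x + g y,
          forall x r, g (x * r) = act (g x) r
        & forall x, fg_right_ideal a x -> g x = f x].

From HB Require Import structures.
From mathcomp Require Import all_boot all_order all_algebra.
From mathcomp Require Import boolp classical_sets functions.
Set Implicit Arguments. Unset Strict Implicit. Unset Printing Implicit Defensive.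
Import Order.TTheory GRing.Theory Num.Theory.
Local Open Scope ring_scope.

(* If R is regular, every finitely generated right ideal I has a left unit
   u in I, so any f : I -> M extends to R by x |-> f (u x): every module is
   f-injective and there is nothing to prove.

   Conversely, let a be a non-regular element. Then 1 is not in the additive
   subgroup R a + ann_r(a), and since Q/Z is divisible with elements of every
   order, some additive eta : R -> Q/Z kills R a + ann_r(a) with eta 1 <> 0.
   Divisible groups are injective Z-modules (Zorn's lemma), hence the
   character module F = Hom_Z(R, Q/Z) is f-injective, and so are the graphs of
   0 and of p |-> p(_ * a) in F x F. Their intersection is not f-injective:
   the map a r |-> (eta r, 0) on a R cannot be extended to R. *)

Definition add_subgroup (G : zmodType) (P : G -> Prop) : Prop :=
  P 0 /\ forall x y, P x -> P y -> P (x - y).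

Section AddSubgroup.
Variables (G : zmodType) (P : G -> Prop).
Hypothesis subP : add_subgroup P.

Lemma subgroupN x : P x -> P (- x).
Proof. by move=> Px; rewrite -sub0r; apply: subP.2 => //; apply: subP.1. Qed.

Lemma subgroupD x y : P x -> P y -> P (x + y).
Proof. by move=> Px Py; rewrite -[y]opprK; apply: subP.2 => //; apply: subgroupN. Qed.

Lemma subgroupMn x n : P x -> P (x *+ n).
Proof.
move=> Px; elim: n => [|n IH]; first by rewrite mulr0n; apply: subP.1.
by rewrite mulrS; apply: subgroupD.
Qed.

Lemma subgroupMz x k : P x -> P (x *~ k).
Proof.
move=> Px; case: k => n; first by rewrite -pmulrn; apply: subgroupMn.
by rewrite NegzE mulrNz -pmulrn; apply/subgroupN/subgroupMn.
Qed.

Lemma subgroup_multiples x0 : add_subgroup (fun k : int => P (x0 *~ k)).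
Proof.
split; first by rewrite mulr0z; apply: subP.1.
by move=> k l Pk Pl; rewrite mulrzBr; apply: subP.2.
Qed.
End AddSubgroup.

Lemma int_subgroup_cyclic (P : int -> Prop) : add_subgroup P ->
  (forall k, P k -> k = 0) \/
  exists n : nat, [/\ (0 < n)%N, P n & forall k, P k -> (n %| k)%Z].
Proof.
move=> subP.
have [allP0|] := pselect (forall k, P k -> k = 0); first by left.
move=> /existsNP[k /not_implyP[Pk /eqP k_neq0]]; right.
have : exists m, `[< (0 < m)%N /\ P m%:Z >].
  exists `|k|%N; apply/asboolP; split; first by rewrite absz_gt0.
  by case: (ler0P k) => k_sign; [rewrite lez0_abs //; apply: subgroupN | rewrite gtz0_abs].
case/ex_minnP => n /asboolP[n_gt0 Pn] n_min.
have nZ0 : n%:Z != 0 by rewrite eqz_nat -lt0n.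
exists n; split => // j Pj; apply/dvdz_mod0P/eqP; apply: contraT => rj_neq0.
have rj_ge0 := modz_ge0 j nZ0.
have P_rj : P (j %% n)%Z.
  rewrite -[(j %% n)%Z](addKr ((j %/ n)%Z * n)) -divz_eq addrC.
  by apply: subP.2 => //; rewrite -mulrzz mulrzz mulrC -mulrzz; apply: (subgroupMz subP).
have : (n <= `|(j %% n)%Z|)%N by apply/n_min/asboolP; rewrite absz_gt0 gez0_abs.
by rewrite leqNgt -ltz_nat gez0_abs // ltz_pmod ?ltz_nat.
Qed.

Definition additive_on (G D : zmodType) (P : G -> Prop) (h : G -> D) : Prop :=
  forall x y, P x -> P y -> h (x + y) = h x + h y.

Definition divisible (D : zmodType) : Prop :=
  forall (d : D) (n : nat), (0 < n)%N -> exists e, e *+ n = d.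

Definition adjoin (G : zmodType) (P : G -> Prop) (x0 : G) (y : G) : Prop :=
  exists w : G * int, P w.1 /\ y = w.1 + x0 *~ w.2.

Section AdditiveOn.
Variables (G D : zmodType) (P : G -> Prop) (h : G -> D).
Hypotheses (subP : add_subgroup P) (addh : additive_on P h).

Lemma additive_on0 : h 0 = 0.
Proof.
have := addh subP.1 subP.1; rewrite addr0.
by move/(congr1 (fun v => v - h 0)); rewrite subrr addrK.
Qed.

Lemma additive_onN x : P x -> h (- x) = - h x.
Proof.
move=> Px; apply/eqP; rewrite -addr_eq0 -addh ?addNr ?additive_on0 //.
exact: (subgroupN subP).
Qed.

Lemma additive_onB x y : P x -> P y -> h (x - y) = h x - h y.
Proof. by move=> Px Py; rewrite addh -?additive_onN //; apply: (subgroupN subP). Qed.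

Lemma additive_onMn x n : P x -> h (x *+ n) = h x *+ n.
Proof.
move=> Px; elim: n => [|n IH]; first by rewrite !mulr0n additive_on0.
by rewrite !mulrS addh ?IH //; apply: (subgroupMn subP).
Qed.

Lemma additive_onMz x k : P x -> h (x *~ k) = h x *~ k.
Proof.
move=> Px; case: k => n; first by rewrite -!pmulrn additive_onMn.
rewrite NegzE !mulrNz -!pmulrn additive_onN ?additive_onMn //.
exact: (subgroupMn subP).
Qed.

Lemma adjoin_subgroup x0 : add_subgroup (adjoin P x0).
Proof.
split; first by exists (0, 0); rewrite mulr0z addr0; split => //; apply: subP.1.
move=> _ _ [[z k] [Pz ->]] [[z' k'] [Pz' ->]].
exists (z - z', k - k'); split; first exact: subP.2.
by rewrite /= mulrzBr opprD addrACA.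
Qed.

Definition compatible_value (x0 : G) (d : D) : Prop :=
  forall k, P (x0 *~ k) -> d *~ k = h (x0 *~ k).

(* a divisible target always offers a compatible value: if x0 *~ k lies in P
   exactly for k in nZ, take an n-th part of h (x0 *~ n) *)
Lemma compatible_value_exists x0 : divisible D -> exists d, compatible_value x0 d.
Proof.
move=> divD.
case: (int_subgroup_cyclic (subgroup_multiples subP x0)) => [mult0|[n [n_gt0 Pn n_dvd]]].
  by exists 0 => k /mult0 ->; rewrite !mulr0z additive_on0.
have [d nd] := divD (h (x0 *~ n)) n n_gt0.
exists d => k /n_dvd/dvdzP[q ->].
by rewrite mulrC !mulrzA additive_onMz // -[d *~ n]pmulrn nd.
Qed.

Lemma adjoin_extension x0 d : compatible_value x0 d ->
  exists h', [/\ additive_on (adjoin P x0) h', forall z, P z -> h' z = h z & h' x0 = d].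
Proof.
move=> compat.
pose h' y := if pselect (adjoin P x0 y) is left ex
             then let w := sval (cid ex) in h w.1 + d *~ w.2 else 0.
have h'E z k : P z -> h' (z + x0 *~ k) = h z + d *~ k.
  move=> Pz; rewrite /h'; case: pselect => [ex|[]]; last by exists (z, k).
  case: (cid ex) => -[z1 k1] /= [Pz1 e].
  have ex0 : x0 *~ (k - k1) = z1 - z.
    by rewrite mulrzBr -[z1](addrK (x0 *~ k1)) -e addrAC [z + _]addrC addrK.
  have := compat (k - k1); rewrite ex0 => /(_ (subP.2 _ _ Pz1 Pz)).
  rewrite additive_onB // mulrzBr => /(congr1 (fun v => v + (h z + d *~ k1))).
  by rewrite addrCA subrK addrA subrK => ->.
exists h'; split.
- move=> _ _ [[z k] [Pz ->]] [[z' k'] [Pz' ->]].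
  rewrite addrACA -mulrzDr !h'E //=; last exact: (subgroupD subP).
  by rewrite addh // mulrzDr addrACA.
- by move=> z Pz; have := h'E z 0 Pz; rewrite mulr0z !addr0.
- by have := h'E 0 1 subP.1; rewrite mulr1z additive_on0 !add0r.
Qed.
End AdditiveOn.

Section DivisibleExtension.
Variables (G D : zmodType) (I : G -> Prop) (h0 : G -> D).
Hypotheses (divD : divisible D) (subI : add_subgroup I) (addh0 : additive_on I h0).

Record partial_extension := PartialExtension {
  pe_dom : G -> Prop;
  pe_fun : G -> D;
  pe_subgroup : add_subgroup pe_dom;
  pe_additive : additive_on pe_dom pe_fun;
  pe_domI : forall x, I x -> pe_dom x;
  pe_funI : forall x, I x -> pe_fun x = h0 x }.

Definition pe_le (p q : partial_extension) : Prop :=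
  (forall x, pe_dom p x -> pe_dom q x) /\
  (forall x, pe_dom p x -> pe_fun q x = pe_fun p x).

Lemma pe_le_refl p : pe_le p p.
Proof. by []. Qed.

Lemma pe_le_trans p q r : pe_le p q -> pe_le q r -> pe_le p r.
Proof.
move=> [dpq fpq] [dqr fqr]; split => [x /dpq/dqr //|x px].
by rewrite fqr ?fpq //; apply: dpq.
Qed.

Definition pe_base : partial_extension :=
  PartialExtension subI addh0 (fun _ Ix => Ix) (fun _ _ => erefl).

Lemma pe_base_le p : pe_le pe_base p.
Proof. by split => [x /pe_domI //|x Ix]; apply: pe_funI. Qed.

(* every chain of partial extensions has an upper bound: their union *)
Lemma pe_chain_bound (A : set partial_extension) : total_on A pe_le ->
  exists u, forall p, A p -> pe_le p u.
Proof.
move=> totA.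
pose member p := A p \/ p = pe_base.
have totM : total_on member pe_le.
  move=> p q [Ap|->] [Aq|->]; by [apply: totA | right; apply: pe_base_le
    | left; apply: pe_base_le | left].
pose dom x := exists p, member p /\ pe_dom p x.
pose fn x := if pselect (dom x) is left ex then pe_fun (sval (cid ex)) x else 0.
have agree p q x : member p -> member q -> pe_dom p x -> pe_dom q x ->
    pe_fun p x = pe_fun q x.
  by move=> Mp Mq px qx; case: (totM p q Mp Mq) => [[_ ->]|[_ ->]].
have fnE p x : member p -> pe_dom p x -> fn x = pe_fun p x.
  move=> Mp px; rewrite /fn; case: pselect => [ex|[]]; last by exists p.
  by case: (cid ex) => q /= [Mq qx]; apply: agree.
have common x y : dom x -> dom y -> exists p, [/\ member p, pe_dom p x & pe_dom p y].
  move=> [p [Mp px]] [q [Mq qy]].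
  case: (totM p q Mp Mq) => [[dpq _]|[dqp _]].
    by exists q; split => //; apply: dpq.
  by exists p; split => //; apply: dqp.
have Mbase : member pe_base by right.
have sub_dom : add_subgroup dom.
  split; first by exists pe_base; split => //; apply: subI.1.
  move=> x y dx dy; have [p [Mp px py]] := common x y dx dy.
  by exists p; split => //; apply: (pe_subgroup p).2.
have add_fn : additive_on dom fn.
  move=> x y dx dy; have [p [Mp px py]] := common x y dx dy.
  by rewrite !(fnE p) ?pe_additive //; apply: (subgroupD (pe_subgroup p)).
have domI x : I x -> dom x by exists pe_base.
have fnI x : I x -> fn x = h0 x by move=> Ix; rewrite (fnE pe_base).
exists (PartialExtension sub_dom add_fn domI fnI) => p Ap.
by split => x px /=; [exists p; split => //; left | apply: fnE => //; left].
Qed.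

Lemma pe_enlarge p x0 : exists q, pe_le p q /\ pe_dom q x0.
Proof.
have sub_p := pe_subgroup p; have add_p := @pe_additive p.
have [d compat] := compatible_value_exists sub_p add_p x0 divD.
have [h' [add_h' h'_ext h'x0]] := adjoin_extension sub_p add_p compat.
have domI x : I x -> adjoin (pe_dom p) x0 x.
  by move=> Ix; exists (x, 0); rewrite mulr0z addr0; split => //; apply: pe_domI.
have h'I x : I x -> h' x = h0 x by move=> Ix; rewrite h'_ext ?pe_funI //; apply: pe_domI.
exists (PartialExtension (adjoin_subgroup sub_p x0) add_h' domI h'I); split.
  by split => x px /=; [exists (x, 0); rewrite mulr0z addr0 | apply: h'_ext].
by exists (0, 1); rewrite /= mulr1z add0r; split => //; apply: sub_p.1.
Qed.

Theorem divisible_extension : exists H : G -> D,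
  (forall x y, H (x + y) = H x + H y) /\ (forall x, I x -> H x = h0 x).
Proof.
pose le p q := `[< pe_le p q >].
have [|||m m_max] := @ZL_preorder _ pe_base le.
- by move=> p; apply/asboolP/pe_le_refl.
- by move=> p q r /asboolP pq /asboolP qr; apply/asboolP; apply: pe_le_trans qr.
- move=> A totA; have [|u ub] := pe_chain_bound (A := A).
    by move=> p q Ap Aq; case: (totA p q Ap Aq) => /asboolP; by [left | right].
  by exists u => p /ub /asboolP.
have dom_m x : pe_dom m x.
  have [q [mq qx]] := pe_enlarge m x.
  by have /asboolP[+ _] := m_max q (asboolT mq); apply.
exists (pe_fun m); split; last exact: pe_funI.
by move=> x y; apply: pe_additive.
Qed.
End DivisibleExtension.

Lemma separating_hom (G D : zmodType) (L : G -> Prop) (x : G) :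
  divisible D -> (forall n, (1 < n)%N -> exists e : D, e != 0 /\ e *+ n = 0) ->
  add_subgroup L -> ~ L x ->
  exists H : G -> D, [/\ forall a b, H (a + b) = H a + H b,
     forall a, L a -> H a = 0 & H x != 0].
Proof.
move=> divD torD subL Lx_false.
have zero_add : additive_on L (fun _ => 0 : D) by move=> *; rewrite addr0.
have [d [d_neq0 compat]] : exists d : D, d != 0 /\ compatible_value L (fun _ => 0) x d.
  case: (int_subgroup_cyclic (subgroup_multiples subL x)) => [mult0|[n [n_gt0 Ln n_dvd]]].
    have [e [e_neq0 _]] := torD 2%N erefl.
    by exists e; split => // k /mult0 ->; rewrite mulr0z.
  have n_gt1 : (1 < n)%N.
    rewrite ltn_neqAle n_gt0 andbT; apply/eqP => n1.
    by apply: Lx_false; move: Ln; rewrite -n1 mulr1z.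
  have [e [e_neq0 ne]] := torD n n_gt1.
  by exists e; split => // k /n_dvd/dvdzP[q ->]; rewrite mulrC mulrzA -pmulrn ne mul0rz.
have [h' [add_h' h'L h'x]] := adjoin_extension subL zero_add compat.
have [H [addH H_ext]] := divisible_extension divD (adjoin_subgroup subL x) add_h'.
exists H; split => // [a La|].
  by rewrite H_ext ?h'L //; exists (a, 0); rewrite mulr0z addr0.
rewrite H_ext ?h'x //; exists (0, 1); rewrite /= mulr1z add0r; split => //.
exact: subL.1.
Qed.

Definition frac (x : rat) : rat := x - (Num.floor x)%:~R.

Lemma frac_ge0 x : 0 <= frac x.
Proof. by rewrite subr_ge0 floor_le. Qed.

Lemma frac_lt1 x : frac x < 1.
Proof. by have := floorD1_gt x; rewrite intrD ltrBlDl addrC. Qed.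

Lemma frac_id x : 0 <= x < 1 -> frac x = x.
Proof. by move=> x01; rewrite /frac (floor_def (m := 0)) ?subr0 // add0r. Qed.

Lemma fracDz x (k : int) : frac (x + k%:~R) = frac x.
Proof. by rewrite /frac floorDrz ?intr_int // intrKfloor intrD opprD addrACA subrr addr0. Qed.

Lemma fracDl x y : frac (frac x + y) = frac (x + y).
Proof. by rewrite [frac x]/frac -intrN addrAC fracDz. Qed.

Lemma fracDr x y : frac (x + frac y) = frac (x + y).
Proof. by rewrite addrC fracDl addrC. Qed.

(* Q/Z, realised as the rationals in [0, 1) with addition modulo 1 *)
Definition QZ := {q : rat | 0 <= q < 1}.

Lemma frac_in01 x : 0 <= frac x < 1.
Proof. by rewrite frac_ge0 frac_lt1. Qed.

Definition qz (x : rat) : QZ := exist _ (frac x) (frac_in01 x).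

Lemma frac_val (a : QZ) : frac (val a) = val a.
Proof. by apply: frac_id; case: a. Qed.

Definition qz_add (a b : QZ) : QZ := qz (val a + val b).
Definition qz_opp (a : QZ) : QZ := qz (- val a).

Lemma qz_addA : associative qz_add.
Proof. by move=> a b c; apply: val_inj; rewrite /= fracDl fracDr addrA. Qed.
Lemma qz_addC : commutative qz_add.
Proof. by move=> a b; apply: val_inj; rewrite /= addrC. Qed.
Lemma qz_add0 : left_id (qz 0) qz_add.
Proof. by move=> a; apply: val_inj; rewrite /= fracDl add0r frac_val. Qed.
Lemma qz_addN : left_inverse (qz 0) qz_opp qz_add.
Proof. by move=> a; apply: val_inj; rewrite /= fracDl addNr. Qed.

HB.instance Definition _ := [isSub for (fun a : QZ => sval a)].
HB.instance Definition _ := [Choice of QZ by <:].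
HB.instance Definition _ := GRing.isZmodule.Build QZ qz_addA qz_addC qz_add0 qz_addN.

Lemma qz_valMn x n : val (qz x *+ n) = frac (x *+ n).
Proof.
elim: n => [|n IH]; first by rewrite !mulr0n /= frac_id // lexx ltr01.
by rewrite !mulrS /= IH fracDl fracDr.
Qed.

Lemma qz_divisible : divisible QZ.
Proof.
move=> d n n_gt0; have nR : (0 : rat) < n%:R by rewrite ltr0n.
exists (qz (val d / n%:R)); apply: val_inj.
by rewrite qz_valMn -[_ *+ n]mulr_natr divfK ?gt_eqF // frac_val.
Qed.

Lemma qz_torsion (n : nat) : (1 < n)%N -> exists e : QZ, e != 0 /\ e *+ n = 0.
Proof.
move=> n_gt1; have nR : (1 : rat) < n%:R by rewrite ltr1n.
have n_gt0 : (0 : rat) < n%:R by apply: lt_trans nR.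
have inv01 : 0 <= (n%:R : rat)^-1 < 1 by rewrite invr_ge0 ltW //= invf_lt1.
exists (qz (n%:R)^-1); split.
  apply/eqP => /(congr1 val); rewrite /= !frac_id ?lexx ?ltr01 //.
  by move/eqP; rewrite invr_eq0 gt_eqF.
by apply: val_inj; rewrite qz_valMn -[_ *+ n]mulr_natr mulVf ?gt_eqF // frac_id ?lexx ?ltr01.
Qed.

Section FinitelyGeneratedIdeals.
Variable R : pzRingType.
Implicit Types (a x y r : R) (s : seq R).

Lemma fg_nil x : fg_right_ideal [::] x <-> x = 0.
Proof.
split; first by case=> rs [_ ->]; rewrite big_ord0.
by move=> ->; exists [::]; rewrite big_ord0.
Qed.

Lemma fg_cons a s x : fg_right_ideal (a :: s) x <->
  exists r y, fg_right_ideal s y /\ x = a * r + y.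
Proof.
split.
  case=> [[|r rs]] [//= /eqP]; rewrite eqSS => /eqP size_rs ->.
  by exists r, (\sum_(i < size s) s`_i * rs`_i); rewrite big_ord_recl; split => //; exists rs.
case=> r [y [[rs [size_rs ->]] ->]]; exists (r :: rs).
by rewrite /= size_rs big_ord_recl.
Qed.

Lemma fg_principal a x : fg_right_ideal [:: a] x <-> exists r, x = a * r.
Proof.
split; first by case/fg_cons => r [y [/fg_nil -> ->]]; exists r; rewrite addr0.
by case=> r ->; apply/fg_cons; exists r, 0; rewrite addr0; split => //; apply/fg_nil.
Qed.

Lemma fg_subgroup s : add_subgroup (fg_right_ideal s).
Proof.
elim: s => [|a s [IH0 IHB]].
  by split=> [|x y /fg_nil -> /fg_nil ->]; apply/fg_nil; rewrite ?subr0.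
split; first by apply/fg_cons; exists 0, 0; rewrite mulr0 addr0.
move=> x y /fg_cons[r [x' [Ix' ->]]] /fg_cons[r' [y' [Iy' ->]]].
apply/fg_cons; exists (r - r'), (x' - y').
by rewrite mulrBr opprD addrACA; split => //; apply: IHB.
Qed.

Lemma fgD s x y : fg_right_ideal s x -> fg_right_ideal s y -> fg_right_ideal s (x + y).
Proof. by move=> Ix Iy; apply: (subgroupD (fg_subgroup s)). Qed.

Lemma fgM s x r : fg_right_ideal s x -> fg_right_ideal s (x * r).
Proof.
elim: s x => [|a s IH] x; first by move=> /fg_nil ->; apply/fg_nil; rewrite mul0r.
case/fg_cons => r1 [x' [Ix' ->]]; apply/fg_cons; exists (r1 * r), (x' * r).
by rewrite mulrDl mulrA; split => //; apply: IH.
Qed.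
End FinitelyGeneratedIdeals.

(* in a von Neumann regular ring every finitely generated right ideal I has a
   left unit u in I (u x = x for x in I); the induction adds one generator a
   to an ideal with left unit e, using a regular inverse of a - e a *)
Lemma vnr_fg_left_unit (R : pzRingType) : von_neumann_regular R ->
  forall s, exists u : R, fg_right_ideal s u /\ forall x, fg_right_ideal s x -> u * x = x.
Proof.
move=> vnr; elim=> [|a s [e [Ie e_unit]]].
  by exists 0; split => [|x /fg_nil ->]; [apply/fg_nil | rewrite mulr0].
set c := a - e * a; have [y cyc] := vnr c.
set f := c * y; set u := e + f - f * e.
have Is x : fg_right_ideal s x -> fg_right_ideal (a :: s) x.
  by move=> Ix; apply/fg_cons; exists 0, x; rewrite mulr0 add0r.
have If : fg_right_ideal (a :: s) f.
  apply/fg_cons; exists y, (- (e * (a * y))); split; last by rewrite /f /c mulrBl -mulrA.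
  by apply: (subgroupN (fg_subgroup s)); apply: fgM.
exists u; split.
  by apply: (fg_subgroup _).2; [apply: fgD => //; apply: Is | apply: fgM].
move=> _ /fg_cons[r [z [Iz ->]]].
have uz : u * z = z by rewrite /u !mulrDl mulNr -mulrA e_unit // addrK.
have ua : u * a = a.
  by rewrite /u !mulrDl mulNr -mulrA -addrA -mulrBr -/c /f -cyc /c addrC subrK.
by rewrite mulrDr mulrA ua uz.
Qed.

(* over a von Neumann regular ring every module is f-injective: extend by
   x |-> f (u x) with u a left unit of the ideal *)
Lemma vnr_f_injective (R : pzRingType) (E : zmodType) (act : E -> R -> E)
    (C : E -> Prop) : von_neumann_regular R -> f_injective act C.
Proof.
move=> vnr s f fC fD fM; have [u [Iu u_unit]] := vnr_fg_left_unit vnr s.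
exists (fun x => f (u * x)); split => [x|x y|x r|x Ix].
- by apply: fC; apply: fgM.
- by rewrite mulrDr fD //; apply: fgM.
- by rewrite mulrA fM //; apply: fgM.
- by rewrite u_unit.
Qed.

Lemma additiveB (G D : zmodType) (f : G -> D) :
  (forall x y, f (x + y) = f x + f y) -> forall x y, f (x - y) = f x - f y.
Proof. by move=> fD x y; apply: (additive_onB (P := fun _ => True)). Qed.

Section PairModule.
Variables (R : pzRingType) (E : zmodType) (act : E -> R -> E).

Definition pair_act (e : E * E) (r : R) : E * E := (act e.1 r, act e.2 r).

Lemma pair_act_axioms : rmod_axioms act -> rmod_axioms pair_act.
Proof.
case=> actDl actDr actM act1; split.
- by move=> [x1 x2] [y1 y2] r; rewrite /pair_act /= actDl actDl.
- by move=> [x1 x2] r s; rewrite /pair_act /= actDr actDr.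
- by move=> [x1 x2] r s; rewrite /pair_act /= actM actM.
- by move=> [x1 x2]; rewrite /pair_act /= act1 act1.
Qed.

Definition graph (psi : E -> E) (e : E * E) : Prop := e.2 = psi e.1.

Variable psi : E -> E.
Hypotheses (psiD : forall x y, psi (x + y) = psi x + psi y)
           (psiM : forall x r, psi (act x r) = act (psi x) r).

Lemma graph_submodule : submodule pair_act (graph psi).
Proof.
have psi0 : psi 0 = 0 by apply: (additive_on0 (P := fun _ => True)).
split; first by rewrite /graph /= psi0.
- by move=> [x1 x2] [y1 y2]; rewrite /graph /= => -> ->; rewrite additiveB.
- by move=> [x1 x2] r; rewrite /graph /= => ->; rewrite psiM.
Qed.

(* the graph of an endomorphism of an f-injective module is f-injective (it is
   isomorphic to that module): extend the first coordinate, then apply psi *)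
Lemma graph_f_injective : f_injective act (fun _ => True) ->
  f_injective pair_act (graph psi).
Proof.
move=> finjE s f fC fD fM.
have [||g [_ gD gM g_ext]] := finjE s (fun x => (f x).1) (fun _ _ => I).
- by move=> x y Ix Iy; rewrite fD.
- by move=> x r Ix; rewrite fM.
exists (fun x => (g x, psi (g x))); split => [x|x y|x r|x Ix].
- by [].
- by rewrite gD psiD.
- by rewrite gM psiM.
- by rewrite g_ext //; have := fC x Ix; rewrite /graph; case: (f x) => ? ? /= ->.
Qed.
End PairModule.

Section CharacterModule.
Variables (R : pzRingType) (D : zmodType).

Definition additive_fun : pred (R -> D) :=
  fun f => `[< forall x y, f (x + y) = f x + f y >].

Lemma additive_fun_zmod_closed : zmod_closed additive_fun.
Proof.
split; first by apply/asboolP => x y; rewrite /= addr0.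
move=> f g /asboolP fD /asboolP gD; apply/asboolP => x y.
by rewrite !fctE fD gD opprD addrACA.
Qed.

HB.instance Definition _ := GRing.isZmodClosed.Build (R -> D) additive_fun
  additive_fun_zmod_closed.

(* the character module Hom_Z(R, D), a right R-module via (p r)(s) = p (r s) *)
Record dual := Dual { dual_fun :> R -> D; _ : dual_fun \in additive_fun }.

HB.instance Definition _ := [isSub for dual_fun].
HB.instance Definition _ := [Choice of dual by <:].
HB.instance Definition _ := [SubChoice_isSubZmodule of dual by <:].

Lemma dualD (p : dual) x y : p (x + y) = p x + p y.
Proof. by case: p => f /= /asboolP. Qed.

Lemma dual_eq (p q : dual) : p =1 q -> p = q.
Proof. by move=> e; apply: val_inj; apply: funext. Qed.

Lemma additive_fun_comp (f : R -> D) (m : R -> R) : f \in additive_fun ->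
  (forall x y, m (x + y) = m x + m y) -> (f \o m) \in additive_fun.
Proof. by move=> /asboolP fD mD; apply/asboolP => x y /=; rewrite mD fD. Qed.

Lemma lmul_additive (r : R) x y : r * (x + y) = r * x + r * y.
Proof. exact: mulrDr. Qed.

Definition dual_act (p : dual) (r : R) : dual :=
  Dual (additive_fun_comp (valP p) (lmul_additive r)).

Lemma dual_actE (p : dual) r s : dual_act p r s = p (r * s).
Proof. by []. Qed.

Lemma dual_act_axioms : rmod_axioms dual_act.
Proof.
split => [p q r|p r s|p r s|p]; apply: dual_eq => t /=.
- by [].
- by rewrite mulrDl dualD.
- by rewrite mulrA.
- by rewrite mul1r.
Qed.

(* if D is divisible, the character module is f-injective (indeed injective):
   extend x |-> f x 1 additively to some eta, and take x |-> eta x *)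
Lemma dual_f_injective : divisible D -> f_injective dual_act (fun _ => True).
Proof.
move=> divD s f _ fD fM.
have h0_add : additive_on (fg_right_ideal s) (fun x => f x 1).
  by move=> x y Ix Iy; rewrite fD.
have [H [HD H_ext]] := divisible_extension divD (fg_subgroup s) h0_add.
have H_in : H \in additive_fun by apply/asboolP.
have [_ actDr actM _] := dual_act_axioms.
exists (dual_act (Dual H_in)); split => [x|x y|x r|x Ix].
- by [].
- exact: actDr.
- exact: actM.
- apply: dual_eq => t; rewrite dual_actE /= H_ext; last exact: fgM.
  by rewrite fM // dual_actE mulr1.
Qed.
End CharacterModule.

Section NonRegularElement.
Variables (R : pzRingType) (a : R).

Definition regularity_obstruction (y : R) : Prop :=
  exists u v, y = u * a + v /\ a * v = 0.

Lemma obstruction_subgroup : add_subgroup regularity_obstruction.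
Proof.
split; first by exists 0, 0; rewrite mul0r addr0 mulr0.
move=> _ _ [u [v [-> av0]]] [u' [v' [-> av'0]]]; exists (u - u'), (v - v').
by rewrite mulrBl opprD addrACA mulrBr av0 av'0 subrr.
Qed.

Lemma obstruction_one : regularity_obstruction 1 -> exists x, a = a * x * a.
Proof.
move=> [u [v [e av0]]]; exists u.
by rewrite -{1}(mulr1 a) e mulrDr av0 addr0 mulrA.
Qed.

Variables (D : zmodType) (eta : dual R D).
Hypothesis eta_obstr : forall y, regularity_obstruction y -> eta y = 0.

(* on the principal ideal a R, the map a r |-> eta r is well defined since
   eta kills ann_r(a) R; it is an R-linear map into the character module *)
Lemma principal_map : exists f : R -> dual R D,
  [/\ forall x y, fg_right_ideal [:: a] x -> fg_right_ideal [:: a] y ->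
        f (x + y) = f x + f y,
      forall x r, fg_right_ideal [:: a] x -> f (x * r) = dual_act (f x) r
    & forall r, f (a * r) = dual_act eta r].
Proof.
have [_ _ actM _] := @dual_act_axioms R D.
have coef x : {r | fg_right_ideal [:: a] x -> x = a * r}.
  apply: cid; case: (pselect (fg_right_ideal [:: a] x)) => [/fg_principal[r ->]|notI].
    by exists r.
  by exists 0 => /notI.
have same p q : a * p = a * q -> dual_act eta p = dual_act eta q.
  move=> apq; apply: dual_eq => t; apply/eqP; rewrite !dual_actE -subr_eq0.
  rewrite -(additiveB (dualD eta)) -mulrBl eta_obstr //.
  by exists 0, ((p - q) * t); rewrite mul0r add0r mulrA mulrBr apq subrr mul0r.
exists (fun x => dual_act eta (sval (coef x))); split.
- move=> x y Ix Iy; have [_ actDr _ _] := @dual_act_axioms R D.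
  rewrite -actDr; apply: same.
  by rewrite mulrDr -!(svalP (coef _)) //; apply: fgD.
- move=> x r Ix; rewrite -actM; apply: same.
  by rewrite mulrA -!(svalP (coef _)) //; apply: fgM.
- by move=> r; apply: same; rewrite -(svalP (coef _)) //; apply/fg_principal; exists r.
Qed.
End NonRegularElement.

Section RightMultiplication.
Variables (R : pzRingType) (D : zmodType) (a : R).

Lemma rmul_additive x y : (x + y) * a = x * a + y * a.
Proof. exact: mulrDl. Qed.

Definition dual_rmul (p : dual R D) : dual R D :=
  Dual (additive_fun_comp (valP p) rmul_additive).

Lemma dual_rmulD p q : dual_rmul (p + q) = dual_rmul p + dual_rmul q.
Proof. by apply: dual_eq. Qed.

Lemma dual_rmul_act p r : dual_rmul (dual_act p r) = dual_act (dual_rmul p) r.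
Proof. by apply: dual_eq => s /=; rewrite mulrA. Qed.

(* the submodules A = F x 0 and B = graph of dual_rmul of F x F (F the
   character module) meet in {(p, 0) | p kills R a}; if eta kills R a + ann_r(a)
   and A :&: B is f-injective, then eta 1 = 0: extend a r |-> (eta r, 0) from
   a R to R and evaluate the extension at a *)
Lemma intersection_obstruction (eta : dual R D) :
  (forall y, regularity_obstruction a y -> eta y = 0) ->
  f_injective (pair_act (@dual_act R D))
    (fun e => graph (fun _ => 0) e /\ graph dual_rmul e) ->
  eta 1 = 0.
Proof.
move=> eta_obstr finj; have [f [fD fM fa]] := principal_map eta_obstr.
have act0 r : dual_act 0 r = 0 :> dual R D by apply: dual_eq.
have [|||g [gC _ gM g_ext]] := finj [:: a] (fun x => (f x, 0)).
- move=> _ /fg_principal[r ->]; split => //; rewrite /graph /= fa.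
  apply: dual_eq => s /=; rewrite eta_obstr //.
  by exists (r * s), 0; rewrite addr0 mulr0 mulrA.
- by move=> x y Ix Iy; apply: injective_projections; rewrite /= ?fD ?addr0.
- by move=> x r Ix; rewrite fM // /pair_act /= act0.
have Ia : fg_right_ideal [:: a] a by apply/fg_principal; exists 1; rewrite mulr1.
have ga : g a = (dual_act eta 1, 0) by rewrite g_ext // -{1}[a]mulr1 fa.
have := gM 1 a; rewrite mul1r ga => /(congr1 (fun e : dual R D * dual R D => e.1 1)).
rewrite /= !mulr1 => ->.
have [g1_zero g1_kills_a] := gC 1.
move: g1_zero g1_kills_a; rewrite /graph /= => -> /(congr1 (fun p : dual R D => p 1)).
by rewrite /= mul1r.
Qed.
End RightMultiplication.

Lemma regular_of_f_injective_intersections (R : pzRingType) :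
  (forall (E : zmodType) (act : E -> R -> E), rmod_axioms act ->
   forall A B : E -> Prop,
     submodule act A -> submodule act B ->
     f_injective act A -> f_injective act B ->
     f_injective act (fun x => A x /\ B x)) ->
  von_neumann_regular R.
Proof.
move=> intersections a; apply: contrapT => a_not_reg.
have [h [hD h_obstr h1_neq0]] := separating_hom qz_divisible qz_torsion
  (obstruction_subgroup a) (fun o => a_not_reg (obstruction_one o)).
have h_in : h \in @additive_fun R QZ by apply/asboolP.
apply: (negP h1_neq0); apply/eqP.
apply: (@intersection_obstruction _ _ a (Dual h_in) h_obstr).
have finjF := dual_f_injective (R := R) qz_divisible.
have zeroD (p q : dual R QZ) : 0 = 0 + 0 :> dual R QZ by rewrite addr0.
have zeroM (p : dual R QZ) (r : R) : 0 = dual_act 0 r :> dual R QZ by apply: dual_eq.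
apply: intersections; first exact/pair_act_axioms/dual_act_axioms.
- exact: (graph_submodule (psi := fun _ => 0) zeroD zeroM).
- exact: graph_submodule (@dual_rmulD _ _ a) (@dual_rmul_act _ _ a).
- exact: (graph_f_injective (psi := fun _ => 0) zeroD zeroM finjF).
- exact: graph_f_injective (@dual_rmulD _ _ a) (@dual_rmul_act _ _ a) finjF.
Qed.

Theorem mainTheorem2 (R : pzRingType) :
  von_neumann_regular R <->
  (forall (E : zmodType) (act : E -> R -> E), rmod_axioms act ->
   forall A B : E -> Prop,
     submodule act A -> submodule act B ->
     f_injective act A -> f_injective act B ->
     f_injective act (fun x => A x /\ B x)).
Proof.
split; last exact: regular_of_f_injective_intersections.
by move=> vnr E act _ A B _ _ _ _; apply: vnr_f_injective.
Qed.
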